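(* Let $z^{(L)}:\mathbb{R}^{n_0}\to\mathbb{R}$ be a scalar-valued $L$-layer network given by $a^{(0)}=x$, $z^{(k)}=W^{(k)}a^{(k-1)}+b^{(k)}$, $a^{(k)}=\sigma^{(k)}(z^{(k)})$ for $k=1,\dots,L-1$, and $z^{(L)}=W^{(L)}a^{(L-1)}+b^{(L)}$ with $W^{(L)}\in\mathbb{R}^{1\times n_{L-1}}$, where each activation $\sigma^{(k)}_i$ is differentiable and slope-restricted in $[\alpha^{(k)}_i,\beta^{(k)}_i]$ with $0\le\alpha^{(k)}_i\le\beta^{(k)}_i<\infty$. Fix $l\in\{1,\dots,L-1\}$ and regard $z^{(L)}$ as a function of $a^{(l)}$ through layers $l+1,\dots,L$. Define matrices $S^{(k,l)}$ for $k=l+1,\dots,L$ by $$S^{(l+1,l)}=|W^{(l+1)}|,\qquad S^{(k,l)}=|W^{(k)}|\,\mathrm{diag}(\beta^{(k-1)})\,S^{(k-1,l)}\quad (k\ge l+2).$$ Then $\Big\|\big(\frac{\partial z^{(L)}}{\partial a^{(l)}}\big)^\top\Big\|_\infty\le\|S^{(L,l)}\|_\infty$ at every point.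
   Context: $|A|$ denotes the elementwise absolute value of a matrix $A$. A function $\sigma:\mathbb{R}\to\mathbb{R}$ is slope-restricted in $[\alpha,\beta]$ if $\alpha\le\frac{\sigma(x)-\sigma(y)}{x-y}\le\beta$ for all $x\ne y$. For a matrix $A$, $\|A\|_\infty$ is the induced $\ell_\infty$ operator norm (maximum absolute row sum). *)

From HB Require Import structures.
From mathcomp Require Import all_boot all_order all_algebra.
From mathcomp Require Import all_classical all_reals all_analysis.
Set Implicit Arguments. Unset Strict Implicit. Unset Printing Implicit Defensive.
Import Order.TTheory GRing.Theory Num.Theory.
Import numFieldNormedType.Exports.
Local Open Scope ring_scope.

Section Net.
Variable R : realType.

Definition mxabs m n (A : 'M[R]_(m, n)) : 'M[R]_(m, n) := map_mx (fun x => `|x|) A.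

(* induced l_infty operator norm: maximum absolute row sum *)
Definition mxnorm_inf m n (A : 'M[R]_(m, n)) : R :=
  \big[Num.max/0]_(i < m) \sum_(j < n) `|A i j|.

Definition slope_restricted (s : R -> R) (al be : R) : Prop :=
  forall x y : R, x != y -> al <= (s x - s y) / (x - y) <= be.

Variables (n : nat -> nat)
  (W : forall k : nat, 'M[R]_(n k, n k.-1))
  (b : forall k : nat, 'cV[R]_(n k))
  (sigma : forall k : nat, 'I_(n k) -> R -> R)
  (betav : forall k : nat, 'I_(n k) -> R)
  (l : nat).

(* forward pass from a^(l): act m a = a^(m+l) *)
Fixpoint act (m : nat) (a : 'cV[R]_(n l)) : 'cV[R]_(n (m + l)) :=
  match m return 'cV[R]_(n (m + l)) with
  | 0 => a
  | m'.+1 => \col_i @sigma (m'.+1 + l) i ((W (m'.+1 + l) *m act m' a + b (m'.+1 + l)) i 0)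
  end.

(* S^(m+1+l, l), for the hidden weights W *)
Fixpoint Shid (m : nat) : 'M[R]_(n (m.+1 + l), n l) :=
  match m return 'M[R]_(n (m.+1 + l), n l) with
  | 0 => mxabs (W l.+1)
  | m'.+1 => mxabs (W (m'.+2 + l)) *m diag_mx (\row_i @betav (m'.+1 + l) i) *m Shid m'
  end.

(* S^(L,l) with L = p.+1 + l and output weights WL : 1 x n_(L-1) *)
Definition Sfinal (p : nat) : 'M[R]_(1, n (p + l)) -> 'M[R]_(1, n l) :=
  match p return 'M[R]_(1, n (p + l)) -> 'M[R]_(1, n l) with
  | 0 => fun WL => mxabs WL
  | q.+1 => fun WL => mxabs WL *m diag_mx (\row_i @betav (q.+1 + l) i) *m Shid q
  end.

(* z^(L) as a function of a^(l), L = p.+1 + l *)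
Definition zL (p : nat) (WL : 'M[R]_(1, n (p + l))) (bL : R) (a : 'cV[R]_(n l)) : R :=
  (WL *m act p a) 0 0 + bL.

End Net.

From HB Require Import structures.
From mathcomp Require Import all_boot all_order all_algebra.
From mathcomp Require Import all_classical all_reals all_analysis.
Import Order.TTheory GRing.Theory Num.Theory.
Import numFieldNormedType.Exports.
Local Open Scope ring_scope.

(* Slope restriction in [alpha, beta] with 0 <= alpha bounds every difference
   quotient, hence every derivative, of an activation to [0, beta].  By the
   chain rule, d a^(m)_j = sigma'(z_j) * sum_i W_ji d a^(m-1)_i, so the
   triangle inequality gives, layer by layer, the entrywise bound
   |d a^(m) / d a^(l)| <= diag(beta^(m)) S^(m,l), and finally
   |d z^(L) / d a^(l)_i| <= S^(L,l)_i.  The infinity norm of the gradient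
   column is the largest of these, which is at most the row sum of S^(L,l). *)

Lemma slope_restricted_derive1 {R : realType} {s : R -> R} {al be x : R} :
  slope_restricted s al be -> derivable s x 1 -> al <= s^`()%classic x <= be.
Proof.
move=> sl ds; rewrite derive1E /derive.
have quot : \forall h \near (0 : R)^'%classic,
    al <= h^-1 *: ((s \o shift x) (h *: 1) - s x) <= be.
  near=> h.
  have h0 : h != 0 by near: h; exact: nbhs_dnbhs_neq.
  rewrite /= [_%:A]mulr1; have := sl (h + x) x; rewrite addrK mulrC; apply.
  by rewrite -subr_eq0 addrK.
by rewrite limr_ge ?limr_le //; apply: filterS quot => h /andP[].
Unshelve. all: by end_near.
Qed.

Lemma mxnorm_inf_ge0 {R : realType} m k (A : 'M[R]_(m, k)) : 0 <= mxnorm_inf A.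
Proof. exact: bigmax_ge_id. Qed.

Lemma mxnorm_inf_col_le_row {R : realType} k (c : 'cV[R]_k) (r : 'rV[R]_k) :
  (forall i, `|c i 0| <= `|r 0 i|) -> mxnorm_inf c <= mxnorm_inf r.
Proof.
move=> cr; apply: bigmax_le => [|i _]; first exact: mxnorm_inf_ge0.
rewrite big_ord1 (le_trans (cr i)) //.
apply: le_trans (le_bigmax _ _ ord0).
by rewrite (bigD1 i) //= lerDl; exact: sumr_ge0.
Qed.

Lemma mxabs_delta {R : realType} m k (i : 'I_m) (j : 'I_k) :
  mxabs (delta_mx i j) = delta_mx i j :> 'M[R]_(m, k).
Proof.
by apply/matrixP => i' j'; rewrite !mxE; case: andP; rewrite ?normr1 ?normr0.
Qed.

Section DirectionalDerivative.
Context {R : realType} {V : normedModType R}.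

Lemma derive_coord m k (a v : 'M[R]_(m, k)) i j :
  'D_v (fun x : 'M[R]_(m, k) => x i j : R^o) a = v i j.
Proof.
by rewrite -[in RHS](derive_id a v) derive_mx ?mxE //; exact: derivable_id.
Qed.

Lemma derive_comp1 (f : V -> R^o) (s : R -> R) a v :
  differentiable f a -> derivable s (f a) 1 ->
  'D_v (s \o f) a = s^`()%classic (f a) * 'D_v f a.
Proof.
move=> df /derivable1_diffP ds.
rewrite !deriveE //; last exact: differentiable_comp.
by rewrite diff_comp //= diff1E // mulrC.
Qed.

Variables (k : nat) (g : 'I_k -> V -> R^o) (w : 'I_k -> R) (c : R).

Lemma affine_combE :
  (fun x => \sum_j w j * g j x + c) = \sum_j (w j *: g j) + cst c.
Proof. by apply/funext => x; rewrite /= fct_sumE. Qed.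

Lemma differentiable_affine_comb a :
  (forall j, differentiable (g j) a) ->
  differentiable (fun x => \sum_j w j * g j x + c) a.
Proof.
move=> dg; rewrite affine_combE; apply: differentiableD => //.
by apply: differentiable_sum => j; exact: differentiableZ.
Qed.

Lemma norm_derive_affine_comb_le a v (B : 'I_k -> R) :
  (forall j, differentiable (g j) a) -> (forall j, `|'D_v (g j) a| <= B j) ->
  `|'D_v (fun x => \sum_j w j * g j x + c) a| <= \sum_j `|w j| * B j.
Proof.
move=> dg gB.
have dgv j : is_derive a v (g j) ('D_v (g j) a).
  exact/derivableP/diff_derivable.
have dfv : is_derive a v (\sum_j (w j *: g j) + cst c)
                         (\sum_j w j * 'D_v (g j) a + 0).
  exact: is_deriveD.
rewrite affine_combE derive_val addr0.
apply: le_trans (ler_norm_sum _ _ _) _; apply: ler_sum => j _.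
by rewrite normrM ler_wpM2l.
Qed.

End DirectionalDerivative.

Section Network.
Context {R : realType} {n : nat -> nat}
  {W : forall k : nat, 'M[R]_(n k, n k.-1)}
  {b : forall k : nat, 'cV[R]_(n k)}
  {sigma : forall k : nat, 'I_(n k) -> R -> R}
  {beta : forall k : nat, 'I_(n k) -> R}
  {l p : nat}.

Hypothesis derivable_sigma : forall k i x, (l < k <= p + l)%N ->
  derivable (sigma k i) x 1.
Hypothesis derive_sigma_bound : forall k i x, (l < k <= p + l)%N ->
  0 <= (sigma k i)^`()%classic x <= beta k i.

Local Notation neuron m j :=
  (fun x : 'cV[R]_(n l) => act W b sigma m x j 0 : R^o).

(* Entrywise bound on the Jacobian of a^(m+l) with respect to a^(l). *)
Definition act_jac_bound m : 'M[R]_(n (m + l), n l) :=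
  match m with
  | 0 => 1%:M
  | m'.+1 => diag_mx (\row_i beta (m'.+1 + l) i) *m Shid W beta l m'
  end.

Lemma Shid_jac_bound m :
  Shid W beta l m = mxabs (W (m.+1 + l)) *m act_jac_bound m.
Proof. by case: m => [|m] /=; rewrite ?mulmx1 ?mulmxA. Qed.

Lemma Sfinal_jac_bound q (WL : 'M[R]_(1, n (q + l))) :
  Sfinal W beta WL = mxabs WL *m act_jac_bound q.
Proof. by case: q WL => [|q] WL /=; rewrite ?mulmx1 ?mulmxA. Qed.

Lemma neuron_succ m i : neuron m.+1 i = sigma (m.+1 + l) i \o
  (fun x => \sum_j W (m.+1 + l) i j * neuron m j x + b (m.+1 + l) i 0).
Proof. by apply/funext => x; rewrite /= !mxE. Qed.

Lemma differentiable_neuron m j x :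
  (m <= p)%N -> differentiable (neuron m j) x.
Proof.
elim: m j => [j _|m IH i mp]; first exact: differentiable_coord.
rewrite neuron_succ; apply: differentiable_comp.
  by apply: differentiable_affine_comb => j; apply: IH; exact: ltnW.
by apply/derivable1_diffP/derivable_sigma; rewrite ltn_add2r ltnS leq_addl.
Qed.

Variables a v : 'cV[R]_(n l).

Lemma norm_derive_neuron_le m j : (m <= p)%N ->
  `|'D_v (neuron m j) a| <= (act_jac_bound m *m mxabs v) j 0.
Proof.
elim: m j => [j _|m IH i mp]; first by rewrite derive_coord mul1mx mxE.
have layer : (l < m.+1 + l <= p + l)%N by rewrite ltn_add2r ltnS leq_addl.
have dz j : differentiable (neuron m j) a.
  by apply: differentiable_neuron; exact: ltnW.
rewrite neuron_succ derive_comp1; last 2 first.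
- exact: differentiable_affine_comb.
- exact: derivable_sigma.
set z := (X in (sigma _ i)^`()%classic X).
have /andP[s0 sbeta] := derive_sigma_bound _ i z layer.
rewrite normrM ger0_norm // -mulmxA mul_diag_mx 2!mxE.
apply: ler_pM => //.
rewrite Shid_jac_bound -mulmxA mxE.
under eq_bigr do rewrite [mxabs _ _ _]mxE.
by apply: norm_derive_affine_comb_le => // j; apply: IH; exact: ltnW.
Qed.

Variables (WL : 'M[R]_(1, n (p + l))) (bL : R).

Lemma zLE : zL W b sigma WL bL = fun x => \sum_j WL 0 j * neuron p j x + bL.
Proof. by apply/funext => x; rewrite /zL mxE. Qed.

Lemma differentiable_zL x : differentiable (zL W b sigma WL bL) x.
Proof.
by rewrite zLE; apply: differentiable_affine_comb => j; exact: differentiable_neuron.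
Qed.

Lemma norm_derive_zL_le :
  `|'D_v (zL W b sigma WL bL) a| <= (Sfinal W beta WL *m mxabs v) 0 0.
Proof.
rewrite zLE Sfinal_jac_bound -mulmxA mxE.
under eq_bigr do rewrite [mxabs _ _ _]mxE.
apply: norm_derive_affine_comb_le => j.
  exact: differentiable_neuron.
exact: norm_derive_neuron_le.
Qed.

End Network.

Theorem proposition2 (R : realType) (n : nat -> nat)
  (W : forall k : nat, 'M[R]_(n k, n k.-1))
  (b : forall k : nat, 'cV[R]_(n k))
  (sigma : forall k : nat, 'I_(n k) -> R -> R)
  (alpha beta : forall k : nat, 'I_(n k) -> R)
  (l p : nat) (WL : 'M[R]_(1, n (p + l)%N)) (bL : R) :
  (0 < l)%N ->
  (forall k (i : 'I_(n k)), (0 < k)%N -> (k < p.+1 + l)%N ->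
     (forall x : R, derivable (sigma k i) x 1) /\
     0 <= alpha k i /\ alpha k i <= beta k i /\
     slope_restricted (sigma k i) (alpha k i) (beta k i)) ->
  forall a : 'cV[R]_(n l),
    (forall i : 'I_(n l), derivable (zL W b sigma WL bL) a (delta_mx i 0)) /\
    mxnorm_inf (\col_(i < n l) ('D_(delta_mx i 0) (zL W b sigma WL bL) a))
      <= mxnorm_inf (Sfinal W beta WL).
Proof.
move=> _ hyp a.
have range k : (l < k <= p + l)%N -> (0 < k)%N /\ (k < p.+1 + l)%N.
  by case/andP => lk kp; split; [exact: leq_ltn_trans lk | rewrite addSn ltnS].
have dsigma k i x (lkp : (l < k <= p + l)%N) : derivable (sigma k i) x 1.
  by have [k0 kL] := range k lkp; case: (hyp k i k0 kL).
have bsigma k i x (lkp : (l < k <= p + l)%N) :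
    0 <= (sigma k i)^`()%classic x <= beta k i.
  have [k0 kL] := range k lkp; have [ds [a0 [_ sl]]] := hyp k i k0 kL.
  have /andP[lo hi] := slope_restricted_derive1 sl (ds x).
  by rewrite hi (le_trans a0 lo).
split=> [i|]; first exact/diff_derivable/(differentiable_zL dsigma).
apply: mxnorm_inf_col_le_row => i; rewrite mxE.
apply: le_trans (norm_derive_zL_le dsigma bsigma a (delta_mx i 0) WL bL) _.
by rewrite mxabs_delta -colE mxE; exact: ler_norm.
Qed.
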